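(* Let $n=|\mathcal{O}|\ge 2$ be the number of candidate operations, let $\delta\ge 0$, and let $\beta=(\beta_1,\dots,\beta_n)\in(0,\infty)^n$ be a Dirichlet concentration parameter satisfying $\|\beta-\mathbf{1}\|_2\le\delta$, where $\mathbf{1}=(1,\dots,1)$. Define $\mu\in\mathbb{R}^n$ and the diagonal matrix $\Sigma=\mathrm{diag}(\Sigma_1,\dots,\Sigma_n)$ by $$\mu_o=\log\beta_o-\frac{1}{n}\sum_{o'=1}^n\log\beta_{o'},\qquad \Sigma_o=\frac{1}{\beta_o}\Big(1-\frac{2}{n}\Big)+\frac{1}{n^2}\sum_{o'=1}^n\frac{1}{\beta_{o'}},\qquad o=1,\dots,n.$$ Let $w^*$ be fixed network weights, let $\mathcal{L}_{val}(w^*,\cdot)$ be the validation loss as a function of the operation mixing weight, and let $\tilde{\mathcal{L}}_{val}(w^*,\nu)=\mathcal{L}_{val}(w^*,\mathrm{Softmax}(\nu))$ for $\nu\in\mathbb{R}^n$, assumed twice differentiable at $\mu$. If $\nabla_\mu^2\tilde{\mathcal{L}}_{val}(w^*,\mu)$ is positive semi-definite, then the (Laplace-approximated, second-order) expected validation loss satisfies $$E_{\theta\sim \mathrm{Dir}(\beta)}\big[\mathcal{L}_{val}(w^*,\theta)\big]\;\approx\;\tilde{\mathcal{L}}_{val}(w^*,\mu)+\tfrac12\,\mathrm{tr}\big(\Sigma\,\nabla_\mu^2\tilde{\mathcal{L}}_{val}(w^*,\mu)\big)\;\ge\;\tilde{\mathcal{L}}_{val}(w^*,\mu)+\frac12\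Big(\frac{1}{1+\delta}\Big(1-\frac{2}{n}\Big)+\frac{1}{n}\cdot\frac{1}{1+\delta}\Big)\mathrm{tr}\big(\nabla_\mu^2\tilde{\mathcal{L}}_{val}(w^*,\mu)\big).$$
   Context: Setting: differentiable neural architecture search where, on each edge of a cell, the operation mixing weight $\theta$ lies on the probability simplex over the candidate operation set $\mathcal{O}$ and is modeled as $\theta\sim\mathrm{Dir}(\beta)$. The symbol $\approx$ refers to the paper's approximation: the Dirichlet distribution is replaced by its Laplace approximation in the softmax basis, i.e. $\theta=\mathrm{Softmax}(\mu+\epsilon)$ with $\epsilon\sim\mathcal{N}(0,\Sigma)$ and $\mu,\Sigma$ as defined in the claim, and $\tilde{\mathcal{L}}_{val}(w^*,\mu+\epsilon)$ is replaced by its second-order Taylor expansion around $\mu$; the rigorous content is the inequality between the middle and right-hand expressions. The paper writes the conclusion as an approximate lower bound ''$E_{q(\theta|\beta)}(\mathcal{L}_{val}(w,\theta))\gtrsim\cdots$''. *)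

From HB Require Import structures.
From mathcomp Require Import all_boot all_order all_algebra.
From mathcomp Require Import all_classical all_reals all_analysis.
Set Implicit Arguments. Unset Strict Implicit. Unset Printing Implicit Defensive.
Import Order.TTheory GRing.Theory Num.Theory.
Import numFieldNormedType.Exports.
Local Open Scope ring_scope.

Definition softmax (R : realType) (n : nat) (nu : 'rV[R]_n) : 'rV[R]_n :=
  \row_i (expR (nu 0 i) / \sum_(j < n) expR (nu 0 j)).

Definition lap_mu (R : realType) (n : nat) (beta : 'rV[R]_n) : 'rV[R]_n :=
  \row_o (ln (beta 0 o) - n%:R^-1 * \sum_(o' < n) ln (beta 0 o')).

Definition lap_Sigma (R : realType) (n : nat) (beta : 'rV[R]_n) : 'M[R]_n :=
  diag_mx (\row_o ((beta 0 o)^-1 * (1 - 2 / n%:R)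
                   + (n%:R ^+ 2)^-1 * \sum_(o' < n) (beta 0 o')^-1)).

Definition basis_vec (R : realType) (n : nat) (o : 'I_n) : 'rV[R]_n :=
  delta_mx 0 o.

Definition hessian (R : realType) (n : nat) (f : 'rV[R]_n -> R) (x : 'rV[R]_n)
  : 'M[R]_n :=
  \matrix_(i, j) ('D_(basis_vec R i) ('D_(basis_vec R j) f)) x.

Definition twice_differentiable_at (R : realType) (n : nat)
  (f : 'rV[R]_n -> R) (x : 'rV[R]_n) : Prop :=
  (\forall y \near x, differentiable f y) /\
  (forall j : 'I_n, differentiable ('D_(basis_vec R j) f) x).

Definition psd (R : realType) (n : nat) (A : 'M[R]_n) : Prop :=
  forall v : 'rV[R]_n, 0 <= (v *m A *m v^T) 0 0.

Definition norm2 (R : realType) (n : nat) (v : 'rV[R]_n) : R :=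
  Num.sqrt (\sum_(i < n) v 0 i ^+ 2).

From HB Require Import structures.
From mathcomp Require Import all_boot all_order all_algebra.
From mathcomp Require Import all_classical all_reals all_analysis.
From mathcomp Require Import lra.
Set Implicit Arguments. Unset Strict Implicit. Unset Printing Implicit Defensive.
Import Order.TTheory GRing.Theory Num.Theory.
Import numFieldNormedType.Exports.
Local Open Scope ring_scope.

(* Every coordinate satisfies |beta_o - 1| <= ||beta - 1|| <= delta, so
   beta_o <= 1 + delta and 1/beta_o >= 1/(1 + delta).  Feeding this into the
   formula for Sigma (whose coefficient 1 - 2/n is nonnegative as n >= 2)
   bounds every diagonal entry of Sigma below by the constant
   c = (1 - 2/n)/(1 + delta) + 1/(n (1 + delta)).  Since Sigma is diagonal,
   tr (Sigma H) = sum_o Sigma_o H_oo, and the diagonal of a positive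
   semi-definite H is nonnegative, hence tr (Sigma H) >= c tr H. *)

Lemma psd_diag_ge0 (R : realType) (n : nat) (A : 'M[R]_n) (i : 'I_n) :
  psd A -> 0 <= A i i.
Proof. by move=> /(_ (delta_mx 0 i)); rewrite -rowE trmx_delta -colE !mxE. Qed.

Lemma norm2_ge_abs_coord (R : realType) (n : nat) (v : 'rV[R]_n) (i : 'I_n) :
  `|v 0 i| <= norm2 v.
Proof.
rewrite /norm2 -sqrtr_sqr; apply: ler_wsqrtr.
rewrite (bigD1 i) //= lerDl.
by apply: sumr_ge0 => j _; rewrite sqr_ge0.
Qed.

Lemma coord_le_norm2_dist_const (R : realType) (n : nat) (v : 'rV[R]_n)
    (a dlt : R) (i : 'I_n) :
  norm2 (v - const_mx a) <= dlt -> v 0 i <= a + dlt.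
Proof.
move=> /(le_trans (norm2_ge_abs_coord (v - const_mx a) i)).
by rewrite !mxE ler_norml => /andP [_]; lra.
Qed.

Lemma mxtrace_diag_mul (R : realType) (n : nat) (d : 'rV[R]_n) (A : 'M[R]_n) :
  \tr (diag_mx d *m A) = \sum_i d 0 i * A i i.
Proof. by rewrite mul_diag_mx /mxtrace; apply: eq_bigr => i _; rewrite mxE. Qed.

Lemma ler_mxtrace_diag_mul (R : realType) (n : nat) (c : R) (d : 'rV[R]_n)
    (A : 'M[R]_n) :
  psd A -> (forall i, c <= d 0 i) -> c * \tr A <= \tr (diag_mx d *m A).
Proof.
move=> psdA cled; rewrite mxtrace_diag_mul /mxtrace mulr_sumr.
by apply: ler_sum => i _; apply: ler_wpM2r; [exact: psd_diag_ge0 | exact: cled].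
Qed.

Lemma lap_Sigma_ge (R : realType) (n : nat) (beta : 'rV[R]_n) (b : R) (o : 'I_n) :
  (2 <= n)%N -> (forall o, 0 < beta 0 o) -> (forall o, beta 0 o <= b) ->
  b^-1 * (1 - 2 / n%:R) + n%:R^-1 * b^-1 <= lap_Sigma beta o o.
Proof.
move=> n_ge2 beta_gt0 beta_le.
have n_gt0 : 0 < n%:R :> R by rewrite ltr0n (leq_trans _ n_ge2).
have inv_b_le o' : b^-1 <= (beta 0 o')^-1.
  by rewrite lef_pV2 ?posrE ?(lt_le_trans (beta_gt0 o')).
have coef_ge0 : 0 <= 1 - 2 / n%:R :> R.
  by rewrite subr_ge0 ler_pdivrMr // mul1r ler_nat.
have sum_ge : n%:R * b^-1 <= \sum_(o' < n) (beta 0 o')^-1.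
  by rewrite mulr_natl -[n in _ *+ n]card_ord -sumr_const; apply: ler_sum => o' _.
rewrite /lap_Sigma !mxE eqxx mulr1n; apply: lerD; first exact: ler_wpM2r.
have -> : n%:R^-1 * b^-1 = (n%:R ^+ 2)^-1 * (n%:R * b^-1).
  by rewrite expr2 invfM -!mulrA (mulKf (lt0r_neq0 n_gt0)).
by apply: ler_wpM2l sum_ge; rewrite invr_ge0 exprn_ge0 // ltW.
Qed.

Theorem proposition1 (R : realType) (n : nat) (dlt : R) (beta : 'rV[R]_n)
  (Lval : 'rV[R]_n -> R) :
  (2 <= n)%N -> 0 <= dlt ->
  (forall o : 'I_n, 0 < beta 0 o) ->
  norm2 (beta - const_mx 1) <= dlt ->
  let mu := lap_mu beta in
  let Sigma := lap_Sigma beta in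
  let Lt := fun nu : 'rV[R]_n => Lval (softmax nu) in
  twice_differentiable_at Lt mu ->
  psd (hessian Lt mu) ->
  Lt mu + 2^-1 * ((1 + dlt)^-1 * (1 - 2 / n%:R) + n%:R^-1 * (1 + dlt)^-1)
          * \tr (hessian Lt mu)
  <= Lt mu + 2^-1 * \tr (Sigma *m hessian Lt mu).
Proof.
move=> n_ge2 _ beta_gt0 beta_near1 mu Sigma Lt _ psdH.
have beta_le o : beta 0 o <= 1 + dlt := coord_le_norm2_dist_const o beta_near1.
rewrite lerD2l -mulrA ler_wpM2l ?invr_ge0 ?ler0n //.
apply: ler_mxtrace_diag_mul psdH _ => o.
have := lap_Sigma_ge o n_ge2 beta_gt0 beta_le.
by rewrite /lap_Sigma [in X in _ <= X -> _]mxE eqxx mulr1n.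
Qed.
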